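(* Let $\Theta$ be an open saturated branch of a tableau in $\mathbf{TAB}_{\mathbf{IB}}$, let $\mathcal{M}^\Theta=(W^\Theta,R^\Theta,V^\Theta)$ be its model, and let $W^\Theta_r=\{w\in W^\Theta \mid wR^\Theta w\}$. If $i\in W^\Theta_r$, then $i$ is not named by the root formula of $\Theta$, i.e. there is no nominal $j$ with $j\in T^\Theta(i)$.
   Context: Hybrid language: fix disjoint countably infinite sets $\mathbf{Prop}$ (propositional variables) and $\mathbf{Nom}$ (nominals). Formulas: $\varphi ::= p \mid i \mid \neg\varphi \mid \varphi\land\varphi \mid \Diamond\varphi \mid @_i\varphi$ with $p\in\mathbf{Prop}$, $i\in\mathbf{Nom}$; $\Box\varphi$ abbreviates $\neg\Diamond\neg\varphi$. Tableau calculus $\mathbf{TAB}_{\mathbf{IB}}$. A tableau is a well-founded tree whose nodes are formulas of the form $@_i\varphi$; its root is a formula $@_i\varphi$ (the root formula) where $i$ does not occur in $\varphi$. A branch is a maximal path; $\varphi\in\Theta$ means $\varphi$ occurs on branch $\Theta$. Each branch is extended by applying the rules below to its formulas as often as possible, except that no further formula is added to a branch once either (i) every new formula generated by applying any rule already occurs on the branch, or (ii) the branch is closed, i.e. contains $@_i\varphi$ and $@_i\neg\varphi$ for some formula $\varphi$ and nominal $i$. Open means not closed. A branch is saturated if every new formula generated by applying some rule already occurs on it. An accessibility formula is a formula $@_i\Diamond j$ added by rule $[\Diamond]$ (with $j$ the new nominal). Rules (premises already on the branch; conclusions added to it): [$\neg\neg$] from $@_i\neg\neg\varphi$ add $@_i\varphi$;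 [$\land$] from $@_i(\varphi\land\psi)$ add $@_i\varphi$ and $@_i\psi$; [$\neg\land$] from $@_i\neg(\varphi\land\psi)$ split the branch into one extended by $@_i\neg\varphi$ and one extended by $@_i\neg\psi$; [$\Diamond$] from $@_i\Diamond\varphi$, which is not an accessibility formula, add $@_i\Diamond j$ and $@_j\varphi$ where $j$ is a nominal not occurring on the branch; this rule is applied at most once per formula, and only if $i$ is a quasi-urfather on the branch (defined below); [$\neg\Diamond$] from $@_i\neg\Diamond\varphi$ and $@_i\Diamond j$ add $@_j\neg\varphi$; [$\Box_{sym}$] from $@_i\Box\varphi$ and $@_j\Diamond i$ add $@_j\varphi$; [$@$] from $@_i@_j\varphi$ add $@_j\varphi$; [$\neg@$] from $@_i\neg@_j\varphi$ add $@_j\neg\varphi$; [$Id$] from $@_i\varphi$, which is not an accessibility formula, and $@_i j$ add $@_j\varphi$; [$Ref$] for any nominal $i$ occurring on the branch add $@_i i$; ($\mathcal{I}$) for any nominal $i$ occurring on the branch add $@_i\neg\Diamond i$. Auxiliary notions for a branch $\Theta$. $@_i\varphi$ is a quasi-subformula of $@_j\psi$ if $\varphi$ is a subformula of $\psi$, or $\varphi=\neg\chi$ with $\chi$ a subformula of $\psi$. For a nominal $i$ occurring in $\Theta$, $T^\Theta(i)=\{\varphi \mid @_i\varphi\in\Theta$ and $@_i\varphi$ is a quasi-subformula of the root formula$\}$. Nominals $i,j$ are twins if $T^\Theta(i)=T^\Theta(j)$. $i\prec_\Theta j$ if $j$ was introduced by applying $[\Diamond]$ to a formula $@_i\Diamond\varphi$;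 $\prec_\Theta^*$ is its reflexive transitive closure. A nominal $i$ is a quasi-urfather on $\Theta$ if there are no twins $j\neq k$ with $j\prec_\Theta^* i$ and $k\prec_\Theta^* i$. The identity urfather $v_\Theta(i)$ of a nominal $i$ occurring in $\Theta$ is the earliest introduced nominal $j$ on $\Theta$ such that $j$ is a twin of $i$ and $j$ is a quasi-urfather; it may fail to exist, and $\mathrm{dom}(v_\Theta)$ denotes the set of nominals for which it exists. A nominal is called an identity urfather on $\Theta$ if it is the identity urfather of some nominal (equivalently $v_\Theta(i)=i$). The model $\mathcal{M}^\Theta=(W^\Theta,R^\Theta,V^\Theta)$ of an open saturated branch $\Theta$ with root formula $@_{i_0}\varphi_0$: $W^\Theta$ is the set of identity urfathers on $\Theta$; $R^\Theta=\{(v_\Theta(i),v_\Theta(j)) \mid @_i\Diamond j\in\Theta,\ i,j\in\mathrm{dom}(v_\Theta)\}\cup\{(v_\Theta(j),v_\Theta(i)) \mid @_i\Diamond j\in\Theta,\ i,j\in\mathrm{dom}(v_\Theta)\}$; $V^\Theta(p)=\{v_\Theta(i)\mid @_i p\in\Theta\}$ for $p\in\mathbf{Prop}$; for a nominal $i$, $V^\Theta(i)=\{v_\Theta(i)\}$ if $i\in\mathrm{dom}(v_\Theta)$ and $V^\Theta(i)=\{i_0\}$ otherwise. A world $i\in W^\Theta$ is named by the root formula of $\Theta$ if there is a nominal $j$ with $j\in T^\Theta(i)$. *)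

From Stdlib Require Import List Relations.
Import ListNotations.

Inductive form : Type :=
| PVar (p : nat)
| Nom (i : nat)
| Neg (f : form)
| And (f g : form)
| Dia (f : form)
| At (i : nat) (f : form).

Definition Box (f : form) : form := Neg (Dia (Neg f)).

(** A tableau node is a formula [@_i phi], represented as the pair [(i, phi)]. *)
Definition node : Type := (nat * form)%type.

Inductive subform : form -> form -> Prop :=
| sub_refl f : subform f f
| sub_neg f g : subform f g -> subform f (Neg g)
| sub_andl f g h : subform f g -> subform f (And g h)
| sub_andr f g h : subform f h -> subform f (And g h)
| sub_dia f g : subform f g -> subform f (Dia g)
| sub_at f i g : subform f g -> subform f (At i g).

Fixpoint noms (f : form) : list nat :=
  match f with
  | PVar _ => []
  | Nom i => [i]
  | Neg g => noms g
  | And g h => noms g ++ noms h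
  | Dia g => noms g
  | At i g => i :: noms g
  end.

Definition node_noms (n : node) : list nat := fst n :: noms (snd n).

(** A branch is recorded as the chronological list of steps that built it:
    the root, applications of rules other than [Dia] (adding a list of
    formulas), and applications of [Dia] to [@_i Dia psi] introducing the
    new nominal [j]. *)
Inductive step : Type :=
| SRoot (i : nat) (f : form)
| SAdd (fs : list node)
| SDia (i : nat) (psi : form) (j : nat).

Definition step_forms (s : step) : list node :=
  match s with
  | SRoot i f => [(i, f)]
  | SAdd fs => fs
  | SDia i psi j => [(i, Dia (Nom j)); (j, psi)]
  end.

Definition forms (B : list step) : list node := flat_map step_forms B.

Definition onb (B : list step) (n : node) : Prop := In n (forms B).

(** Nominals of the branch in order of introduction (first occurrence). *)
Definition branch_noms (B : list step) : list nat := flat_map node_noms (forms B).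

Definition occurs_nom (B : list step) (i : nat) : Prop := In i (branch_noms B).

(** [k] was introduced (strictly) earlier than [j] on the branch. *)
Definition earlier (B : list step) (k j : nat) : Prop :=
  exists l1 l2, branch_noms B = l1 ++ k :: l2 /\ ~ In k l1 /\ ~ In j (l1 ++ [k]).

Definition acc (B : list step) (n : node) : Prop :=
  exists i psi j, In (SDia i psi j) B /\ n = (i, Dia (Nom j)).

Definition closed (B : list step) : Prop :=
  exists i f, onb B (i, f) /\ onb B (i, Neg f).

Definition qsub (phi0 : form) (f : form) : Prop :=
  subform f phi0 \/ exists g, f = Neg g /\ subform g phi0.

Definition T (phi0 : form) (B : list step) (i : nat) (f : form) : Prop :=
  onb B (i, f) /\ qsub phi0 f.

Definition twins (phi0 : form) (B : list step) (i j : nat) : Prop :=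
  forall f, T phi0 B i f <-> T phi0 B j f.

Definition prec (B : list step) (i j : nat) : Prop :=
  exists psi, In (SDia i psi j) B.

Definition prec_star (B : list step) : relation nat :=
  clos_refl_trans nat (prec B).

Definition quasi_urfather (phi0 : form) (B : list step) (i : nat) : Prop :=
  ~ exists j k, j <> k /\ twins phi0 B j k /\ prec_star B j i /\ prec_star B k i.

(** The rules other than [Dia]: each instance lists its alternative
    conclusions (one alternative except for the branching rule [¬∧]). *)
Inductive rule_inst (B : list step) : list (list node) -> Prop :=
| r_negneg i f :
    onb B (i, Neg (Neg f)) -> rule_inst B [[(i, f)]]
| r_and i f g :
    onb B (i, And f g) -> rule_inst B [[(i, f); (i, g)]]
| r_negand i f g :
    onb B (i, Neg (And f g)) -> rule_inst B [[(i, Neg f)]; [(i, Neg g)]]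
| r_negdia i f j :
    onb B (i, Neg (Dia f)) -> onb B (i, Dia (Nom j)) -> rule_inst B [[(j, Neg f)]]
| r_boxsym i f j :
    onb B (i, Box f) -> onb B (j, Dia (Nom i)) -> rule_inst B [[(j, f)]]
| r_at i j f :
    onb B (i, At j f) -> rule_inst B [[(j, f)]]
| r_negat i j f :
    onb B (i, Neg (At j f)) -> rule_inst B [[(j, Neg f)]]
| r_id i f j :
    onb B (i, f) -> ~ acc B (i, f) -> onb B (i, Nom j) -> rule_inst B [[(j, f)]]
| r_ref i :
    occurs_nom B i -> rule_inst B [[(i, Nom i)]]
| r_irr i :
    occurs_nom B i -> rule_inst B [[(i, Neg (Dia (Nom i)))]].

Definition dia_applicable (phi0 : form) (B : list step) (i : nat) (psi : form) (j : nat) : Prop :=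
  onb B (i, Dia psi) /\ ~ acc B (i, Dia psi) /\
  (forall j', ~ In (SDia i psi j') B) /\
  quasi_urfather phi0 B i /\ ~ occurs_nom B j.

Definition legal_step (phi0 : form) (B : list step) (s : step) : Prop :=
  (exists alts fs, rule_inst B alts /\ In fs alts /\ s = SAdd fs) \/
  (exists i psi j, dia_applicable phi0 B i psi j /\ s = SDia i psi j).

(** Saturation: every rule instance already has (one of) its conclusion(s)
    on the branch; [Dia] (whose conclusion always contains a fresh nominal)
    is not applicable. *)
Definition saturated (phi0 : form) (B : list step) : Prop :=
  (forall alts, rule_inst B alts -> exists fs, In fs alts /\ incl fs (forms B)) /\
  (forall i psi j, ~ dia_applicable phi0 B i psi j).

(** Branches (initial segments of branches) of a TAB_IB tableau with root
    formula [@_{i0} phi0]. *)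
Inductive tab_branch (i0 : nat) (phi0 : form) : list step -> Prop :=
| tb_root : ~ In i0 (noms phi0) -> tab_branch i0 phi0 [SRoot i0 phi0]
| tb_ext B s : tab_branch i0 phi0 B -> ~ closed B -> ~ saturated phi0 B ->
    legal_step phi0 B s -> tab_branch i0 phi0 (B ++ [s]).

Definition id_urfather (phi0 : form) (B : list step) (i j : nat) : Prop :=
  occurs_nom B i /\ occurs_nom B j /\ twins phi0 B j i /\ quasi_urfather phi0 B j /\
  forall k, earlier B k j -> ~ (twins phi0 B k i /\ quasi_urfather phi0 B k).

Definition W (phi0 : form) (B : list step) (w : nat) : Prop := id_urfather phi0 B w w.

Definition R (phi0 : form) (B : list step) (w w' : nat) : Prop :=
  exists i j, onb B (i, Dia (Nom j)) /\
    ((id_urfather phi0 B i w /\ id_urfather phi0 B j w') \/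
     (id_urfather phi0 B j w /\ id_urfather phi0 B i w')).

Definition named_by_root (phi0 : form) (B : list step) (w : nat) : Prop :=
  exists j, T phi0 B w (Nom j).

(* Suppose [w R w] is witnessed by [@_a Dia b] with [a] and [b] twins of [w],
   and that [@_w j] is on the branch for some nominal [j].  Twins share the
   quasi-subformula [j], so [@_a j] and [@_b j] are on the branch.  By [Ref] and
   [Id], [@_j a]; transporting the irreflexivity formula [@_j ~Dia j] along it
   gives [@_a ~Dia j], and [~Dia] applied to [@_a Dia b] yields [@_b ~j],
   contradicting [@_b j]. *)
From Stdlib Require Import List.
Import ListNotations.

Lemma occurs_nom_onb (B : list step) (n : node) (x : nat) :
  onb B n -> In x (node_noms n) -> occurs_nom B x.
Proof. intros Hn Hx. apply in_flat_map. exists n. split; assumption. Qed.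

Lemma acc_Dia_Nom (B : list step) (a : nat) (f : form) :
  acc B (a, f) -> exists j, f = Dia (Nom j).
Proof.
  intros (x & psi & j & _ & Heq). injection Heq as _ ->. exists j. reflexivity.
Qed.

Lemma not_acc_Nom (B : list step) (a j : nat) : ~ acc B (a, Nom j).
Proof. intros Hacc. destruct (acc_Dia_Nom _ _ _ Hacc) as [k Hk]. discriminate. Qed.

Lemma not_acc_Neg (B : list step) (a : nat) (f : form) : ~ acc B (a, Neg f).
Proof. intros Hacc. destruct (acc_Dia_Nom _ _ _ Hacc) as [k Hk]. discriminate. Qed.

Section SaturatedBranch.

Variables (phi0 : form) (B : list step).
Hypothesis B_saturated : saturated phi0 B.

Lemma saturated_onb (n : node) : rule_inst B [[n]] -> onb B n.
Proof.
  intros Hrule. destruct (proj1 B_saturated _ Hrule) as (fs & [<- | []] & Hincl).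
  apply Hincl. left. reflexivity.
Qed.

Lemma onb_Nom_sym (i j : nat) : onb B (i, Nom j) -> onb B (j, Nom i).
Proof.
  intros Hij. apply saturated_onb, (r_id B i (Nom i) j); [| apply not_acc_Nom | exact Hij].
  apply saturated_onb, r_ref, (occurs_nom_onb B (i, Nom j)); [exact Hij | left; reflexivity].
Qed.

Lemma onb_irr_transport (i j : nat) : onb B (i, Nom j) -> onb B (i, Neg (Dia (Nom j))).
Proof.
  intros Hij. apply saturated_onb, (r_id B j _ i); [| apply not_acc_Neg | exact (onb_Nom_sym _ _ Hij)].
  apply saturated_onb, r_irr, (occurs_nom_onb B (i, Nom j)); [exact Hij | right; left; reflexivity].
Qed.

Lemma closed_of_Dia_same_name (a b j : nat) :
  onb B (a, Dia (Nom b)) -> onb B (a, Nom j) -> onb B (b, Nom j) -> closed B.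
Proof.
  intros Hab Haj Hbj. exists b, (Nom j). split; [exact Hbj |].
  apply saturated_onb, (r_negdia B a (Nom j) b); [apply onb_irr_transport |]; assumption.
Qed.

End SaturatedBranch.

Lemma id_urfather_named (phi0 : form) (B : list step) (a w j : nat) :
  id_urfather phi0 B a w -> T phi0 B w (Nom j) -> onb B (a, Nom j).
Proof. intros (_ & _ & Htwins & _) HT. exact (proj1 (proj1 (Htwins _) HT)). Qed.

Theorem lemma11 (i0 : nat) (phi0 : form) (B : list step) :
  tab_branch i0 phi0 B -> ~ closed B -> saturated phi0 B ->
  forall i, W phi0 B i -> R phi0 B i i -> ~ named_by_root phi0 B i.
Proof.
  intros _ Hopen Hsat w _ (a & b & Hab & Hurf) [j HT]. apply Hopen.
  destruct Hurf as [[Ha Hb] | [Hb Ha]];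
    apply (closed_of_Dia_same_name phi0 B Hsat a b j Hab);
    apply (id_urfather_named phi0 B _ w j); assumption.
Qed.
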